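(* Let $U$ be a regular molecule. Then (1) if $U$ is acyclic, it is dimension-wise acyclic; (2) if $U$ is dimension-wise acyclic, it is frame-acyclic.
   Context: All posets are finite; $y$ covers $x$ if $x<y$ with nothing strictly between. A finite poset is graded if for each $x$ all maximal covering chains descending from $x$ have the same length $\dim x$; $U_n$ denotes elements of dimension $n$. An oriented graded poset is a finite graded poset with a label $\pm$ on each covering pair; $\Delta^\alpha x$ ($\nabla^\alpha x$) is the set of elements covered by (covering) $x$ with label $\alpha$. For closed (downward closed) $U$, with $\mathrm{cl}$ downward closure, $\max U$ maximal elements, $\dim U$ maximal dimension ($-1$ if empty): $\Delta^\alpha_nU=\{x\in U_n:\nabla^{-\alpha}x\cap U=\emptyset\}$, $\partial^\alpha_nU=\mathrm{cl}(\Delta^\alpha_nU)\cup\bigcup_{j<n}\mathrm{cl}((\max U)_j)$ ($\emptyset$ for $n<0$), $\partial_nU=\partial^-_nU\cup\partial^+_nU$, subscript omitted for $n=\dim U-1$; $\Delta^\alpha_kx:=\Delta^\alpha_k\mathrm{cl}\{x\}$. Maps are functions with $f(\partial^\alpha_n\mathrm{cl}\{x\})=\partial^\alpha_n\mathrm{cl}\{f(x)\}$; inclusions are injective maps. $U\#_kV$ is the pushout of $U\hookleftarrow\partial^+_kU\cong\partial^-_kV\hookrightarrow V$; for $U,V$ of equal dimension $n$ with $\partial U\cong\partial V$ compatibly with $\partial^\pm$, $U\Rightarrow V$ is that pushout with a new element $\top$ of dimension $n+1$, $\Delta^-\top=U_n$, $\Delta^+\top=V_n$. $U$ is round if $\partial^-_nU\cap\partial^+_nU=\partial_{n-1}U$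 for all $n<\dim U$. Regular molecules: smallest isomorphism-closed class containing the point, closed under $U\#_kV$ ($k<\min(\dim U,\dim V)$) and $U\Rightarrow V$ for round regular molecules of equal dimension. Submolecule inclusions: smallest class of inclusions of regular molecules containing isomorphisms and $U\hookrightarrow U\#_kV\hookleftarrow V$, closed under composition; $V\sqsubseteq U$ if $V$ is closed and its inclusion is a submolecule inclusion. The oriented Hasse diagram of $U$ has vertex set $U$ and an edge from $y$ to $x$ iff $y\in\Delta^-x$ or $x\in\Delta^+y$; $U$ is acyclic if this graph is acyclic. $\mathcal F_kU$ ($k$-flow graph): vertices $\bigcup_{i>k}U_i$, edge $x\to y$ iff $\Delta^+_kx\cap\Delta^-_ky\ne\emptyset$; $U$ is dimension-wise acyclic if $\mathcal F_kU$ is acyclic for all $k\in\mathbb N$. $\mathcal M_kU$: induced subgraph of $\mathcal F_kU$ on $\bigcup_{i>k}(\max U)_i$. $\mathrm{frdim}\,U$ is the dimension of $\bigcup\{\mathrm{cl}\{x\}\cap\mathrm{cl}\{y\}:x\ne y\in\max U\}$. $U$ is frame-acyclic if for all $V\sqsubseteq U$, $\mathcal M_{\mathrm{frdim}V}V$ is acyclic. *)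

(* Oriented graded posets, regular molecules and acyclicity
   notions, following the paper's definitions (labels: false = -, true = +). *)
From HB Require Import structures.
From mathcomp Require Import all_boot all_order all_algebra.
Set Implicit Arguments. Unset Strict Implicit. Unset Printing Implicit Defensive.
Import GRing.Theory Num.Theory.

(* An oriented graded poset: a finite set with, for each x and label a,
   the set [face a x] = Delta^a x of elements covered by x with label a.
   The partial order is the reflexive-transitive closure of the covering
   relation.  [dim] is the grading: covering lowers dim by exactly one and
   elements covering nothing have dim 0, so that dim x is the common length
   of all maximal descending covering chains from x. *)
Record ogposet := OGPoset {
  ogcar :> finType;
  face : bool -> ogcar -> {set ogcar};
  dim : ogcar -> nat;
  face_disj : forall x : ogcar, [disjoint face false x & face true x];
  face_dim : forall (a : bool) (x y : ogcar), y \in face a x -> dim x = (dim y).+1;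
  noface_dim : forall x : ogcar, face false x :|: face true x = set0 -> dim x = 0
}.
Arguments face {o} a x.
Arguments dim {o} x.

Section OGDefs.
Variable P : ogposet.
Implicit Types (A : {set P}) (x y : P).

Definition faces x : {set P} := face false x :|: face true x.
Definition cofaces (a : bool) x : {set P} := [set y : P | x \in face a y].
Definition below x y : bool := connect (fun u v : P => v \in faces u) y x.
Definition cl A : {set P} := [set x : P | [exists y in A, below x y]].
Definition closed A : Prop := cl A \subset A.
Definition sdim A : int :=
  if A == set0 then (-1)%R else Posz (\max_(x in A) dim x)%N.
Definition layer A (n : int) : {set P} := [set x in A | Posz (dim x) == n].
Definition maxel A : {set P} := [set x in A | [forall y in A, below x y ==> (y == x)]].
Definition Delta (a : bool) (n : int) A : {set P} :=
  [set x in layer A n | [disjoint cofaces (~~ a) x & A]].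
Definition bd (a : bool) (n : int) A : {set P} :=
  if (n < 0)%R then set0
  else cl (Delta a n A) :|: cl [set x in maxel A | (Posz (dim x) < n)%R].
Definition bd2 (n : int) A : {set P} := bd false n A :|: bd true n A.
Definition round A : Prop :=
  forall n : nat, ((Posz n) < sdim A)%R ->
    bd false (Posz n) A :&: bd true (Posz n) A = bd2 ((Posz n) - 1)%R A.

Definition acyclic_on (S : {set P}) (e : rel P) : Prop :=
  forall (x : P) (p : seq P), x \in S -> all (mem S) p -> path e x p ->
    last x p = x -> p = [::].

Definition hasse_edge : rel P :=
  fun y x => (y \in face false x) || (x \in face true y).
Definition og_acyclic : Prop := acyclic_on [set: P] hasse_edge.

Definition DeltaK (a : bool) (k : int) x : {set P} := Delta a k (cl [set x]).
Definition flow_vert (k : int) A : {set P} := [set x in A | (k < Posz (dim x))%R].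
Definition flow_edge (k : int) : rel P :=
  fun x y => DeltaK true k x :&: DeltaK false k y != set0.
Definition dimwise_acyclic : Prop :=
  forall k : nat, acyclic_on (flow_vert (Posz k) [set: P]) (flow_edge (Posz k)).

Definition frdim A : int :=
  sdim (\bigcup_(x in maxel A) \bigcup_(y in maxel A | y != x)
          (cl [set x] :&: cl [set y])).
Definition M_frdim_acyclic A : Prop :=
  acyclic_on (flow_vert (frdim A) (maxel A)) (flow_edge (frdim A)).

End OGDefs.

Definition ogmap (P Q : ogposet) (f : P -> Q) : Prop :=
  forall (x : P) (a : bool) (n : nat),
    f @: bd a (Posz n) (cl [set x]) = bd a (Posz n) (cl [set f x]).
Definition inclusion (P Q : ogposet) (f : P -> Q) : Prop :=
  ogmap f /\ injective f.
Definition ogiso (P Q : ogposet) (f : P -> Q) : Prop :=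
  exists g : Q -> P, [/\ cancel f g, cancel g f, ogmap f & ogmap g].
(* isomorphism between closed subsets A of P and B of Q (with the induced
   oriented graded structure): an orientation-preserving bijection A -> B *)
Definition subiso (P Q : ogposet) (A : {set P}) (B : {set Q}) (phi : P -> Q) : Prop :=
  [/\ {in A &, injective phi}, phi @: A = B &
      forall (a : bool), {in A, forall x : P, phi @: face a x = face a (phi x)}].

(* ---------- pasting U #_k V (specified up to isomorphism) ----------
   W with i : U -> W, j : V -> W is (isomorphic to) the pushout of
   U <- bd^+_k U ~= bd^-_k V -> V, with i, j the pushout injections. *)
Definition paste_incl (k : nat) (U V W : ogposet) (i : U -> W) (j : V -> W) : Prop :=
  [/\ inclusion i, inclusion j &
    exists phi : U -> V,
      [/\ subiso (bd true (Posz k) [set: U]) (bd false (Posz k) [set: V]) phi,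
          (forall u v, i u = j v <-> (u \in bd true (Posz k) [set: U] /\ phi u = v)) &
          (forall w, (exists u, i u = w) \/ (exists v, j v = w))]].

Definition atom_incl (U V W : ogposet) (i : U -> W) (j : V -> W) (top : W) : Prop :=
  [/\ inclusion i, inclusion j &
    exists phi : U -> V,
      [/\ subiso (bd2 (sdim [set: U] - 1)%R [set: U]) (bd2 (sdim [set: V] - 1)%R [set: V]) phi,
          (forall a, phi @: bd a (sdim [set: U] - 1)%R [set: U]
                     = bd a (sdim [set: V] - 1)%R [set: V]),
          (forall u v, i u = j v <->
              (u \in bd2 (sdim [set: U] - 1)%R [set: U] /\ phi u = v)),
          (forall w, [\/ exists u, i u = w, exists v, j v = w | w = top]) &
          [/\ (forall u, i u <> top), (forall v, j v <> top),
              face false top = i @: layer [set: U] (sdim [set: U]) &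
              face true top = j @: layer [set: V] (sdim [set: V])]]].

Inductive regmol : ogposet -> Prop :=
| rm_point (P : ogposet) : #|P| = 1 -> regmol P
| rm_iso (P Q : ogposet) (f : P -> Q) : ogiso f -> regmol P -> regmol Q
| rm_paste (k : nat) (U V W : ogposet) (i : U -> W) (j : V -> W) :
    regmol U -> regmol V ->
    ((Posz k) < sdim [set: U])%R -> ((Posz k) < sdim [set: V])%R ->
    paste_incl k i j -> regmol W
| rm_atom (U V W : ogposet) (i : U -> W) (j : V -> W) (top : W) :
    regmol U -> regmol V -> round [set: U] -> round [set: V] ->
    sdim [set: U] = sdim [set: V] ->
    atom_incl i j top -> regmol W.

Inductive submol : forall P Q : ogposet, (P -> Q) -> Prop :=
| sm_iso (P Q : ogposet) (f : P -> Q) :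
    regmol P -> regmol Q -> ogiso f -> submol f
| sm_left (k : nat) (U V W : ogposet) (i : U -> W) (j : V -> W) :
    regmol U -> regmol V -> regmol W -> paste_incl k i j -> submol i
| sm_right (k : nat) (U V W : ogposet) (i : U -> W) (j : V -> W) :
    regmol U -> regmol V -> regmol W -> paste_incl k i j -> submol j
| sm_comp (P Q R : ogposet) (f : P -> Q) (g : Q -> R) :
    submol f -> submol g -> submol (g \o f).

Section SubOg.
Variables (P : ogposet) (V : {set P}) (hV : closed V).

Definition subcar : finType := {x : P | x \in V}.
Definition subface (a : bool) (x : subcar) : {set subcar} :=
  [set y : subcar | val y \in face a (val x)].
Definition subdim (x : subcar) : nat := dim (val x).

Lemma subface_disj (x : subcar) : [disjoint subface false x & subface true x].
Proof.
rewrite disjoint_subset; apply/subsetP => y; rewrite !inE => h1.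
by rewrite (disjointFr (face_disj (val x)) h1).
Qed.

Lemma subface_dim a (x y : subcar) : y \in subface a x -> subdim x = (subdim y).+1.
Proof. by rewrite inE => /face_dim. Qed.

Lemma subnoface_dim (x : subcar) :
  subface false x :|: subface true x = set0 -> subdim x = 0.
Proof.
move=> h; apply: noface_dim; apply/setP => y; rewrite !inE.
apply/negbTE/negP => hy.
have yV : y \in V.
  apply: (subsetP hV); rewrite inE; apply/existsP; exists (val x).
  rewrite (valP x) /=; apply: connect1; rewrite /faces inE.
  by case/orP: hy => ->; rewrite ?orbT.
move/setP: h => /(_ (exist _ y yV)); rewrite !inE /=.
by case/orP: hy => ->; rewrite ?orbT.
Qed.

Definition sub_og : ogposet :=
  @OGPoset subcar subface subdim subface_disj subface_dim subnoface_dim.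
Definition sub_incl : sub_og -> P := fun x => val x.
End SubOg.

Definition frame_acyclic (U : ogposet) : Prop :=
  forall (V : {set U}) (hV : closed V),
    submol (@sub_incl U V hV) -> M_frdim_acyclic [set: sub_og hV].

(* In a regular molecule every atom cl{x} has its output boundary reachable
   from x, and x reachable from its input boundary, in the oriented Hasse
   diagram.  Inclusions preserve this, so pastings inherit it from their
   factors; for the new top element of U => V, roundness forces every
   boundary element of U or V of lower dimension into the shared boundary,
   so an output element of the new atom lies in V and is reached from the top
   through a top-dimensional element of V (symmetrically for inputs and U).
   An edge x -> y of the k-flow graph passes through some z in
   Delta^+_k x /\ Delta^-_k y, so it yields a non-empty Hasse path from x to y
   and a flow cycle yields a Hasse cycle.  For (2), M_k V is a subgraph of
   F_k U as soon as V is closed. *)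
From mathcomp Require Import all_boot all_order all_algebra zify.
Set Implicit Arguments. Unset Strict Implicit. Unset Printing Implicit Defensive.
Import Order.TTheory GRing.Theory Num.Theory.

Lemma disjointP (T : finType) (A B : {pred T}) :
  reflect (forall x, x \in A -> x \in B -> False) [disjoint A & B].
Proof.
apply: (iffP pred0P) => [h x xA xB|h x /=]; first by move: (h x); rewrite /= xA xB.
by apply/negbTE/andP => -[/h].
Qed.

Lemma connect_homo (T T' : finType) (f : T -> T') (e : rel T) (e' : rel T') :
  {homo f : x y / e x y >-> e' x y} -> {homo f : x y / connect e x y >-> connect e' x y}.
Proof.
move=> fe x y /connectP [p xp ->]; apply/connectP; exists (map f p); last by rewrite last_map.
by rewrite path_map; apply: sub_path xp.
Qed.

Section OGPosetTheory.
Variable P : ogposet.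
Implicit Types (x y z : P) (A : {set P}).

Lemma face_faces a x y : y \in face a x -> y \in faces x.
Proof. by rewrite /faces inE; case: a => ->; rewrite ?orbT. Qed.

Lemma faces_dim x y : y \in faces x -> dim x = (dim y).+1.
Proof. by rewrite /faces inE => /orP [] /face_dim. Qed.

Lemma faces_below x y : y \in faces x -> below y x.
Proof. exact: connect1. Qed.

Lemma below_refl x : below x x.
Proof. exact: connect0. Qed.

Lemma below_trans x y z : below x y -> below y z -> below x z.
Proof. by move=> xy yz; apply: connect_trans yz xy. Qed.

Lemma path_faces_dim x p :
  path (fun u v : P => v \in faces u) x p -> dim (last x p) + size p = dim x.
Proof.
elim: p x => [|y p IHp] x /=; first by rewrite addn0.
by case/andP=> /faces_dim -> /IHp <-; rewrite addnS.
Qed.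

Lemma below_dim y x : below y x -> dim y <= dim x.
Proof. by case/connectP=> p /path_faces_dim <- ->; rewrite leq_addr. Qed.

Lemma below_eq y x : below y x -> dim y = dim x -> y = x.
Proof. by case/connectP=> -[|z p] // /path_faces_dim <- -> /=; lia. Qed.

Lemma below_faces y x : below y x -> dim x = (dim y).+1 -> y \in faces x.
Proof.
case/connectP=> p xp ->; move: (path_faces_dim xp).
by case: p xp => [|z [|z' p]] /=; [lia | rewrite andbT | lia].
Qed.

Lemma below_antisym x y : below x y -> below y x -> x = y.
Proof.
by move=> xy yx; apply: (below_eq xy); apply/eqP; rewrite eqn_leq (below_dim xy) (below_dim yx).
Qed.

Lemma in_cl1 z x : (z \in cl [set x]) = below z x.
Proof.
rewrite inE; apply/existsP/idP => [[y /andP [/set1P -> //]]|zx].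
by exists x; rewrite set11.
Qed.

Lemma clP z A : reflect (exists2 y, y \in A & below z y) (z \in cl A).
Proof.
rewrite inE; apply: (iffP existsP) => [[y /andP [yA zy]]|[y yA zy]]; exists y => //.
by rewrite yA.
Qed.

Lemma cl_down A y z : y \in cl A -> below z y -> z \in cl A.
Proof. by case/clP=> w wA yw zy; apply/clP; exists w => //; apply: below_trans yw. Qed.

Lemma cl_closed A : closed (cl A).
Proof. by apply/subsetP => z /clP [y yA zy]; apply: cl_down yA zy. Qed.

Lemma cl1_refl x : x \in cl [set x].
Proof. by rewrite in_cl1 below_refl. Qed.

Lemma maxel_cl1 x : x \in maxel (cl [set x]).
Proof.
rewrite inE cl1_refl; apply/forall_inP => y; rewrite in_cl1 => yx.
by apply/implyP => xy; rewrite (below_antisym yx xy).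
Qed.

Lemma inDelta a m A x :
  (x \in Delta a m A) = [&& x \in A, Posz (dim x) == m & [disjoint cofaces (~~ a) x & A]].
Proof. by rewrite /Delta /layer !inE andbA. Qed.

Lemma incofaces a x y : (y \in cofaces a x) = (x \in face a y).
Proof. by rewrite inE. Qed.

Lemma bd_nat a (n : nat) A :
  bd a n A = cl (Delta a n A) :|: cl [set x in maxel A | (Posz (dim x) < n)%R].
Proof. by []. Qed.

Lemma Delta_bd a (n : nat) A y : y \in Delta a n A -> y \in bd a n A.
Proof.
by move=> yD; rewrite bd_nat inE; apply/orP; left; apply/clP; exists y => //; apply: below_refl.
Qed.

Lemma bd_dim a (m : int) A y : y \in bd a m A -> exists2 n : nat, m = n & dim y <= n.
Proof.
case: m => [n|n]; last by rewrite /bd inE.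
rewrite bd_nat inE => /orP [] /clP [w]; rewrite ?inDelta ?inE.
- by case/and3P=> _ /eqP [<-] _ /below_dim; exists (dim w).
- by rewrite ltz_nat => /andP [_ /ltnW wn] /below_dim yw; exists n => //; apply: leq_trans wn.
Qed.

Lemma bd_sub a m A : bd a m A \subset cl A.
Proof.
rewrite /bd; case: ifP => _; first exact: sub0set.
apply/subsetP => z; rewrite in_setU => /orP [] /clP [w wA zw]; apply/clP; exists w => //.
  by move: wA; rewrite inDelta => /andP [].
by move: wA; rewrite !inE => /andP [/andP []].
Qed.

Lemma bd_full a (n : nat) x : dim x <= n -> bd a n (cl [set x]) = cl [set x].
Proof.
move=> xn; apply/eqP; rewrite eqEsubset; apply/andP; split.
  exact: subset_trans (bd_sub _ _ _) (cl_closed _).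
have x_bd : x \in bd a n (cl [set x]).
  rewrite bd_nat inE; move: xn; rewrite leq_eqVlt => /orP [/eqP <-|xn].
  - apply/orP; left; apply/clP; exists x; last exact: below_refl.
    rewrite inDelta cl1_refl eqxx /=; apply/disjointP => w; rewrite incofaces in_cl1.
    by move=> /face_dim xw /below_dim; rewrite xw ltnn.
  - apply/orP; right; apply/clP; exists x; last exact: below_refl.
    by rewrite inE maxel_cl1 ltz_nat.
apply/subsetP => z; rewrite in_cl1 => zx; move: x_bd.
by rewrite bd_nat !in_setU => /orP [] h; apply/orP; [left|right]; apply: cl_down h zx.
Qed.

Lemma bd_face a x y : dim x = (dim y).+1 ->
  (y \in bd a (dim y) (cl [set x])) = (y \in face a x).
Proof.
move=> xy; apply/idP/idP => [|yx].
- rewrite bd_nat inE => /orP [] /clP [w].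
  + rewrite inDelta in_cl1 => /and3P [wx /eqP [wy] wmax] yw.
    rewrite -(below_eq yw (esym wy)) in wx wmax.
    have ynot : y \notin face (~~ a) x.
      by apply/negP => yx; move/disjointP/(_ x): wmax; rewrite incofaces cl1_refl => /(_ yx isT).
    by move: (below_faces wx xy) ynot; rewrite /faces inE; case: a {wmax} => /orP [] ->.
  + by rewrite inE ltz_nat => /andP [_ wy] /below_dim yw; move: (leq_trans wy yw); rewrite ltnn.
- apply: Delta_bd; rewrite inDelta in_cl1 faces_below ?(face_faces yx) //= eqxx /=.
  apply/disjointP => w; rewrite incofaces in_cl1 => yw wx.
  have ewx : w = x by apply: (below_eq wx); move: (face_dim yw) (below_dim wx); lia.
  rewrite ewx in yw; move/disjointP/(_ y): (face_disj x).
  by case: a yx yw => ? ?; apply.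
Qed.

End OGPosetTheory.

Section Inclusions.
Variables (P Q : ogposet) (f : P -> Q).
Hypotheses (f_map : ogmap f) (f_inj : injective f).

Lemma ogmap_cl1 x : f @: cl [set x] = cl [set f x].
Proof.
have := f_map x true (maxn (dim x) (dim (f x))).
by rewrite !bd_full ?leq_maxl ?leq_maxr.
Qed.

Lemma inclusion_dim x : dim (f x) = dim x.
Proof.
have fx_cl := cl1_refl (f x).
apply/eqP; rewrite eqn_leq; apply/andP; split; rewrite leqNgt; apply/negP => lt_dim.
- move: fx_cl; rewrite -ogmap_cl1 -(bd_full true (leqnn (dim x))) f_map.
  by case/bd_dim=> n [<-]; rewrite leqNgt lt_dim.
- move: fx_cl; rewrite -(bd_full true (leqnn (dim (f x)))) -f_map.
  by case/imsetP=> y /bd_dim [n [<-]] yx /f_inj eyx; rewrite -eyx leqNgt lt_dim in yx.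
Qed.

Lemma inclusion_face a x : f @: face a x = face a (f x).
Proof.
apply/setP => y'; apply/imsetP/idP => [[y yx ->]|y'x].
- rewrite -bd_face ?inclusion_dim ?(face_dim yx) // -f_map.
  by apply/imsetP; exists y; rewrite ?bd_face ?(face_dim yx).
- have : y' \in bd a (dim y') (cl [set f x]) by rewrite bd_face ?(face_dim y'x).
  rewrite -f_map => /imsetP [y yx ey']; subst y'; exists y => //.
  move: (face_dim y'x) yx; rewrite !inclusion_dim => dxy.
  by rewrite bd_face.
Qed.

Lemma inclusion_in_face a x y : y \in face a x -> f y \in face a (f x).
Proof. by move=> yx; rewrite -inclusion_face; apply/imsetP; exists y. Qed.

Lemma inclusion_faces x y : y \in faces x -> f y \in faces (f x).
Proof. by rewrite /faces !inE => /orP [] /inclusion_in_face ->; rewrite ?orbT. Qed.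

Lemma inclusion_below x y : below x y -> below (f x) (f y).
Proof. exact: (connect_homo inclusion_faces). Qed.

Lemma inclusion_hasse_connect x y :
  connect (@hasse_edge P) x y -> connect (@hasse_edge Q) (f x) (f y).
Proof.
apply: connect_homo => u v; rewrite /hasse_edge.
by case/orP=> /inclusion_in_face ->; rewrite ?orbT.
Qed.

End Inclusions.

(* A [z] with no (-)-coface in [cl{x}] is an element of the output boundary
   of the atom [cl{x}], one with no (+)-coface of its input boundary. *)
Definition boundary_reachable (P : ogposet) (x : P) : Prop :=
  forall z, z \in cl [set x] ->
    ([disjoint cofaces false z & cl [set x]] -> connect (@hasse_edge P) x z) /\
    ([disjoint cofaces true z & cl [set x]] -> connect (@hasse_edge P) z x).

Lemma inclusion_boundary_reachable (P Q : ogposet) (f : P -> Q) :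
  ogmap f -> injective f -> (forall x : P, boundary_reachable x) ->
  forall x, boundary_reachable (f x).
Proof.
move=> f_map f_inj reach x z; rewrite -{1}ogmap_cl1 // => /imsetP [z' z'x ->].
have no_coface b :
    [disjoint cofaces b (f z') & cl [set f x]] -> [disjoint cofaces b z' & cl [set x]].
  move=> dis; apply/disjointP => w; rewrite incofaces in_cl1 => z'w wx.
  move/disjointP/(_ (f w)): dis; rewrite incofaces in_cl1.
  by rewrite (inclusion_in_face f_map f_inj z'w) (inclusion_below f_map f_inj wx) => /(_ isT isT).
have [to_out from_in] := reach x z' z'x.
by split=> [/(no_coface false)/to_out | /(no_coface true)/from_in];
  apply: inclusion_hasse_connect.
Qed.

Section Round.
Variable P : ogposet.
Implicit Types (x y z : P) (A : {set P}).

Lemma sdim_nonempty A x : x \in A -> sdim A = Posz (\max_(y in A) dim y).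
Proof. by rewrite /sdim; case: eqP => // ->; rewrite inE. Qed.

Lemma dim_le_sdim A x (n : nat) : sdim A = n -> x \in A -> dim x <= n.
Proof. by move=> An xA; move: An; rewrite (sdim_nonempty xA) => -[<-]; apply: leq_bigmax_cond. Qed.

Lemma exists_maxel_above x : exists2 y, y \in maxel [set: P] & below x y.
Proof.
have [y xy ymax] := @arg_maxnP P x (below x) (@dim P) (below_refl x).
exists y => //; rewrite inE in_setT; apply/forall_inP => w _; apply/implyP => yw.
apply/eqP/esym/(below_eq yw); apply/eqP; rewrite eqn_leq below_dim //=.
exact/ymax/(below_trans xy).
Qed.

Lemma maxel_Delta a y : y \in maxel [set: P] -> y \in Delta a (dim y) [set: P].
Proof.
rewrite inE in_setT => /forall_inP ymax; rewrite inDelta in_setT eqxx /=.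
apply/disjointP => w; rewrite incofaces => yw _.
have /eqP ewy := implyP (ymax w (in_setT w)) (faces_below (face_faces yw)).
by move: (face_dim yw); rewrite ewy; lia.
Qed.

(* A maximal element of lower dimension would lie in both boundaries at its own
   dimension, hence by roundness in a boundary of even lower dimension. *)
Lemma round_maxel_dim (n : nat) y : round [set: P] -> sdim [set: P] = n ->
  y \in maxel [set: P] -> dim y = n.
Proof.
move=> roundP sdimP ymax; move: (dim_le_sdim sdimP (in_setT y)).
rewrite leq_eqVlt => /orP [/eqP //|lt_yn].
have := roundP (dim y); rewrite sdimP ltz_nat => /(_ lt_yn) /setP /(_ y).
rewrite inE !Delta_bd ?maxel_Delta // /bd2 inE => /esym /orP [] /bd_dim [m em ym]; lia.
Qed.

Lemma round_bd2_mono (k d : nat) : round [set: P] -> (Posz (k + d) < sdim [set: P])%R ->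
  bd2 k [set: P] \subset bd2 (k + d)%N [set: P].
Proof.
move=> roundP; elim: d => [|d IHd] lt_sdim; first by rewrite addn0.
apply: subset_trans (IHd _) _; first by apply: lt_trans lt_sdim; rewrite ltz_nat addnS.
move: lt_sdim; rewrite addnS => /roundP; rewrite -addn1 PoszD addrK => <-.
exact: subset_trans (subsetIl _ _) (subsetUl _ _).
Qed.

Lemma round_Delta_bd2 (n k : nat) a u : round [set: P] -> sdim [set: P] = n -> k < n ->
  u \in Delta a k [set: P] -> u \in bd2 (sdim [set: P] - 1)%R [set: P].
Proof.
move=> roundP sdimP lt_kn uD.
have -> : (sdim [set: P] - 1)%R = Posz (k + (n.-1 - k)) by rewrite sdimP; lia.
apply: (subsetP (round_bd2_mono roundP _)); first by rewrite sdimP ltz_nat; lia.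
by rewrite /bd2 inE; case: (a) uD => /Delta_bd ->; rewrite ?orbT.
Qed.

End Round.

Section Atom.
Variables (U W : ogposet) (i : U -> W) (top : W) (b : bool).
Hypotheses (i_map : ogmap i) (i_inj : injective i) (roundU : round [set: U])
  (top_face : face b top = i @: layer [set: U] (sdim [set: U])).

Lemma atom_top_face (n : nat) u : sdim [set: U] = n -> dim u = n -> i u \in face b top.
Proof.
by move=> sdimU du; rewrite top_face; apply/imsetP; exists u; rewrite // /layer !inE du sdimU eqxx.
Qed.

Lemma atom_below_top u : below (i u) top.
Proof.
have [y ymax uy] := exists_maxel_above u.
have sdimU := sdim_nonempty (in_setT u).
apply: below_trans (inclusion_below i_map i_inj uy) (faces_below (face_faces _)).
exact: atom_top_face sdimU (round_maxel_dim roundU sdimU ymax).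
Qed.

Lemma atom_no_coface c u :
  [disjoint cofaces c (i u) & cl [set top]] -> [disjoint cofaces c u & [set: U]].
Proof.
move=> dis; apply/disjointP => w; rewrite incofaces => uw _.
move/disjointP/(_ (i w)): dis; rewrite incofaces in_cl1 atom_below_top.
by rewrite (inclusion_in_face i_map i_inj uw) => /(_ isT isT).
Qed.

Lemma atom_side_bd2 u :
  [disjoint cofaces b (i u) & cl [set top]] -> u \in bd2 (sdim [set: U] - 1)%R [set: U].
Proof.
move=> dis; have sdimU := sdim_nonempty (in_setT u).
move: (dim_le_sdim sdimU (in_setT u)); rewrite leq_eqVlt => /orP [/eqP du | lt_du].
  move/disjointP/(_ top): dis; rewrite incofaces cl1_refl.
  by rewrite (atom_top_face sdimU du) => /(_ isT isT).
apply: (round_Delta_bd2 (a := ~~ b) roundU sdimU lt_du).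
by rewrite inDelta in_setT eqxx negbK (atom_no_coface dis).
Qed.

End Atom.

Lemma atom_reach_output (V W : ogposet) (j : V -> W) (top : W) :
  ogmap j -> injective j -> round [set: V] ->
  face true top = j @: layer [set: V] (sdim [set: V]) ->
  (forall y : V, boundary_reachable y) ->
  forall v, [disjoint cofaces false (j v) & cl [set top]] ->
    connect (@hasse_edge W) top (j v).
Proof.
move=> j_map j_inj roundV top_face reach v dis.
have [y ymax vy] := exists_maxel_above v.
have sdimV := sdim_nonempty (in_setT v).
have vy_cl : v \in cl [set y] by rewrite in_cl1.
have [to_out _] := reach y v vy_cl.
have v_out := disjointWr (subsetT (cl [set y])) (atom_no_coface j_map j_inj roundV top_face dis).
apply: connect_trans (connect1 _) (inclusion_hasse_connect j_map j_inj (to_out v_out)).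
by rewrite /hasse_edge (atom_top_face top_face sdimV (round_maxel_dim roundV sdimV ymax)) orbT.
Qed.

Lemma atom_reach_input (U W : ogposet) (i : U -> W) (top : W) :
  ogmap i -> injective i -> round [set: U] ->
  face false top = i @: layer [set: U] (sdim [set: U]) ->
  (forall y : U, boundary_reachable y) ->
  forall u, [disjoint cofaces true (i u) & cl [set top]] ->
    connect (@hasse_edge W) (i u) top.
Proof.
move=> i_map i_inj roundU top_face reach u dis.
have [y ymax uy] := exists_maxel_above u.
have sdimU := sdim_nonempty (in_setT u).
have uy_cl : u \in cl [set y] by rewrite in_cl1.
have [_ from_in] := reach y u uy_cl.
have u_in := disjointWr (subsetT (cl [set y])) (atom_no_coface i_map i_inj roundU top_face dis).
apply: connect_trans (inclusion_hasse_connect i_map i_inj (from_in u_in)) (connect1 _).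
by rewrite /hasse_edge (atom_top_face top_face sdimU (round_maxel_dim roundU sdimU ymax)).
Qed.

Lemma atom_boundary_reachable (U V W : ogposet) (i : U -> W) (j : V -> W) (top : W) :
  (forall u : U, boundary_reachable u) -> (forall v : V, boundary_reachable v) ->
  round [set: U] -> round [set: V] -> atom_incl i j top -> boundary_reachable top.
Proof.
move=> reachU reachV roundU roundV
  [[i_map i_inj] [j_map j_inj] [phi [[_ phi_bd _] _ iEj cover [_ _ top_in top_out]]]] z _.
have [->|z_top] := eqVneq z top; first by split=> _; apply: connect0.
split=> dis.
- suff [v ev] : exists v, z = j v.
    by rewrite ev in dis *; apply: (atom_reach_output j_map j_inj roundV top_out reachV).
  case: (cover z) dis z_top => [[u <-]|[v <-]|->]; last by rewrite eqxx.
    move=> /(atom_side_bd2 i_map i_inj roundU top_in) u_bd _.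
    by exists (phi u); apply/iEj.
  by exists v.
- suff [u eu] : exists u, z = i u.
    by rewrite eu in dis *; apply: (atom_reach_input i_map i_inj roundU top_in reachU).
  case: (cover z) dis z_top => [[u <-]|[v <-]|->]; [by exists u | | by rewrite eqxx].
  move=> /(atom_side_bd2 j_map j_inj roundV top_out); rewrite -phi_bd.
  by case/imsetP=> u u_bd -> _; exists u; apply/esym/iEj.
Qed.

Lemma regmol_boundary_reachable (P : ogposet) : regmol P -> forall x : P, boundary_reachable x.
Proof.
elim=> {P} [P P1 | P Q f [g [fK gK f_map _]] _ reachP
  | k U V W i j _ reachU _ reachV _ _ [[i_map i_inj] [j_map j_inj] [_ [_ _ cover]]]
  | U V W i j top _ reachU _ reachV roundU roundV _ incl] x.
- have Px : all_equal_to x by apply/fintype_le1P; rewrite P1.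
  by move=> z _; rewrite [z]Px; split=> _; apply: connect0.
- rewrite -[x]gK; exact: (inclusion_boundary_reachable f_map (can_inj fK) reachP).
- case: (cover x) => [[u <-]|[v <-]].
  + exact: (inclusion_boundary_reachable i_map i_inj reachU).
  + exact: (inclusion_boundary_reachable j_map j_inj reachV).
- case: (incl) => [[i_map i_inj] [j_map j_inj] [_ [_ _ _ cover _]]].
  case: (cover x) => [[u <-]|[v <-]|->].
  + exact: (inclusion_boundary_reachable i_map i_inj reachU).
  + exact: (inclusion_boundary_reachable j_map j_inj reachV).
  + exact: (atom_boundary_reachable reachU reachV roundU roundV incl).
Qed.

Lemma acyclic_on_subrel (P : ogposet) (S : {set P}) (e e' : rel P) :
  acyclic_on [set: P] e' ->
  {in S, forall x y, e x y -> exists2 x', e' x x' & connect e' x' y} ->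
  acyclic_on S e.
Proof.
move=> acyc e_e' x [//|y p] xS /= /andP [yS pS] /andP [xy yp] last_x.
have [x' xx' x'y] := e_e' x xS y xy.
pose eS := [rel u v | (u \in S) && e u v].
have y_x : connect e' y x.
  rewrite -last_x; apply: (@connect_sub _ eS).
    by move=> u v /andP [uS /(e_e' u uS) [w uw wv]]; apply: connect_trans (connect1 uw) wv.
  apply: (path_connect _ (mem_last y p)); apply: (sub_in_path (P := [in S])) yp; last exact/andP.
  by move=> u v uS _ uv; rewrite /= uS.
have /connectP [q x'q qx] := connect_trans x'y y_x.
suff : x' :: q = [::] by [].
apply: (acyc x _ (in_setT x)); last by rewrite /= -qx.
  by apply/allP => w _; exact: in_setT.
by rewrite /= xx'.
Qed.

Lemma flow_edge_hasse (P : ogposet) : (forall x : P, boundary_reachable x) ->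
  forall (k : nat) (x y : P), x \in flow_vert k [set: P] -> flow_edge k x y ->
  exists2 x', hasse_edge x x' & connect (@hasse_edge P) x' y.
Proof.
move=> reach k x y; rewrite inE in_setT ltz_nat /= => lt_kx /set0Pn [z].
rewrite inE /DeltaK !inDelta => /and4P [/and3P [zx /eqP [dz] x_out] zy _ y_in].
have /connectP [[|x' p] /= xp ez] := (reach x z zx).1 x_out.
  by rewrite -ez dz ltnn in lt_kx.
case/andP: xp => xx' x'p; exists x' => //.
apply: (connect_trans _ ((reach y z zy).2 y_in)).
by apply/connectP; exists p.
Qed.

Lemma dimwise_acyclic_of_acyclic (P : ogposet) :
  (forall x : P, boundary_reachable x) -> og_acyclic P -> dimwise_acyclic P.
Proof.
by move=> reach acyc k; apply: acyclic_on_subrel acyc _ => x xS y; apply: flow_edge_hasse.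
Qed.

Lemma acyclic_on_map (P Q : ogposet) (f : P -> Q) (S : {set P}) (S' : {set Q})
    (e : rel P) (e' : rel Q) :
  {in S, forall x, f x \in S'} -> (forall x y, e x y -> e' (f x) (f y)) ->
  acyclic_on S' e' -> acyclic_on S e.
Proof.
move=> fS fe acyc x p xS pS xp last_x.
suff /(congr1 size) : map f p = [::] by rewrite size_map => /size0nil.
apply: (acyc (f x) (map f p) (fS x xS)).
- by apply/allP => _ /mapP [y /(allP pS) yS ->]; apply: fS.
- by rewrite path_map; apply: sub_path xp.
- by rewrite last_map last_x.
Qed.

Section ClosedSubset.
Variables (P : ogposet) (V : {set P}) (closedV : closed V).

Lemma closed_below x y : x \in V -> below y x -> y \in V.
Proof. by move=> xV yx; apply: (subsetP closedV); apply/clP; exists x. Qed.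

Lemma sub_og_faces (x y : sub_og closedV) : (y \in faces x) = (val y \in faces (val x)).
Proof. by rewrite /faces !inE. Qed.

Lemma sub_og_below (x y : sub_og closedV) : below x y = below (val x) (val y).
Proof.
apply/idP/idP; first by apply: connect_homo => u v; rewrite sub_og_faces.
case/connectP=> p; elim: p y => [|z p IHp] y /=; first by move=> _ /val_inj ->; apply: below_refl.
case/andP=> zy zp xp; have zV := closed_below (valP y) (faces_below zy).
by apply: below_trans (IHp (Sub z zV) zp xp) (faces_below _); rewrite sub_og_faces.
Qed.

Lemma sub_og_DeltaK a (k : int) (x z : sub_og closedV) :
  z \in DeltaK a k x -> val z \in DeltaK a k (val x).
Proof.
rewrite /DeltaK !inDelta !in_cl1 sub_og_below => /and3P [-> -> dis] /=.
apply/disjointP => w; rewrite incofaces in_cl1 => zw wx.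
move/disjointP/(_ (Sub w (closed_below (valP x) wx))): dis.
by rewrite incofaces in_cl1 sub_og_below inE zw wx => /(_ isT isT).
Qed.

End ClosedSubset.

Lemma frame_acyclic_of_dimwise (P : ogposet) : dimwise_acyclic P -> frame_acyclic P.
Proof.
move=> acyc V closedV _; rewrite /M_frdim_acyclic; case: (frdim _) => [k|k].
- apply: (acyclic_on_map (f := @sub_incl P V closedV) _ _ (acyc k)) => [x|x y].
    by rewrite !inE => /andP [_].
  case/set0Pn=> z; rewrite inE => /andP [zx zy].
  by apply/set0Pn; exists (val z); rewrite inE; apply/andP; split; apply: sub_og_DeltaK.
- (* frdim = -1: there is no layer of negative dimension, hence no edge. *)
  move=> x [//|y p] _ _ /andP [/set0Pn [z]].
  by rewrite inE /DeltaK inDelta => /andP [/and3P [_ /eqP]].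
Qed.

Theorem lemma3p39 (U : ogposet) :
  regmol U ->
  (og_acyclic U -> dimwise_acyclic U) /\ (dimwise_acyclic U -> frame_acyclic U).
Proof.
move=> regU; split; last exact: frame_acyclic_of_dimwise.
exact/dimwise_acyclic_of_acyclic/regmol_boundary_reachable.
Qed.
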